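(* Let $L$ be a loss function satisfying axioms (A1), (A2), (A5), (A6), (A7) listed in the context. Then there exists a single real constant $K$ such that for every variable $X$ and every $p\in[0,1]$, $L(X,p)=-K\log p$ and $L(\neg X,p)=-K\log(1-p)$.
   Context: For a finite set $V$ of Boolean variables, a sentence over $V$ is a propositional formula built from variables in $V$; $\mathit{true}$ is the constant true sentence. A loss function $L$ assigns to every $\mathbf p\in[0,1]^V$ and every sentence $\alpha$ with variables in $V$ a value $L(\alpha,\mathbf p)\in\mathbb R\cup\{+\infty\}$; $-\log 0=+\infty$. In $L(X,p)$, $p$ is a vector over $\{X\}$. For disjoint $X,Y$, $[\mathbf p\,\mathbf q]$ is the concatenation of $\mathbf p\in[0,1]^X$, $\mathbf q\in[0,1]^Y$. (A1) Truth: $L(\mathit{true},\mathbf p)=0$ for all $\mathbf p$. (A2) Additive independence: for $\alpha$ over $X$, $\beta$ over $Y$, $X\cap Y=\emptyset$: $L(\alpha\wedge\beta,[\mathbf p\,\mathbf q])=L(\alpha,\mathbf p)+L(\beta,\mathbf q)$. (A5) Label-literal correspondence: for each variable $X$ there are real constants $K_X,K'_X$ with $L(X,p)=-K_X\log p$ and $L(\neg X,p)=-K'_X\log(1-p)$ for all $p\in[0,1]$. (A6) Value symmetry: $L(\alpha,\mathbf p)=L(\bar\alpha,\mathbf 1-\mathbf p)$, where $\bar\alpha$ replaces each variable by its negation and $\mathbf 1-\mathbf p$ is componentwise. (A7) Variable symmetry: for a permutation $\pi$ of the variable set of $\mathbf p$, $L(\alpha,\mathbf p)=L(\pi(\alpha),\pi(\mathbf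 p))$, with $\pi(\alpha)$ the renamed sentence and $\pi(\mathbf p)$ the permuted vector. *)

From HB Require Import structures.
From mathcomp Require Import all_boot all_order all_algebra.
From mathcomp Require Import fingroup perm finmap.
From mathcomp Require Import reals constructive_ereal exp.

Set Implicit Arguments.
Unset Strict Implicit.
Unset Printing Implicit Defensive.

Import Order.TTheory GRing.Theory Num.Theory.
Local Open Scope ring_scope.
Local Open Scope fset_scope.

Inductive sentence (T : Type) : Type :=
| SVar of T
| STrue
| SFalse
| SNot of sentence T
| SAnd of sentence T & sentence T
| SOr of sentence T & sentence T.
Arguments STrue {T}.
Arguments SFalse {T}.

Fixpoint svars (T : choiceType) (a : sentence T) : {fset T} :=
  match a with
  | SVar x => [fset x]
  | STrue | SFalse => fset0
  | SNot b => svars b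
  | SAnd b c | SOr b c => svars b `|` svars c
  end.

Fixpoint srename (T : Type) (f : T -> T) (a : sentence T) : sentence T :=
  match a with
  | SVar x => SVar (f x)
  | STrue => STrue
  | SFalse => SFalse
  | SNot b => SNot (srename f b)
  | SAnd b c => SAnd (srename f b) (srename f c)
  | SOr b c => SOr (srename f b) (srename f c)
  end.

Fixpoint sbar (T : Type) (a : sentence T) : sentence T :=
  match a with
  | SVar x => SNot (SVar x)
  | STrue => STrue
  | SFalse => SFalse
  | SNot b => SNot (sbar b)
  | SAnd b c => SAnd (sbar b) (sbar c)
  | SOr b c => SOr (sbar b) (sbar c)
  end.

(* A loss function: for every finite variable set V, every vector p indexed
   by V, and every sentence, a value in R ∪ {±oo} (the "no -oo" requirement
   is imposed as a hypothesis of the theorem). Only the values for p in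
   [0,1]^V and sentences with variables in V are meaningful. *)
Definition loss (R : realType) (T : choiceType) :=
  forall V : {fset T}, (V -> R) -> sentence T -> \bar R.

Definition unitvec (R : realType) (T : choiceType) (V : {fset T}) (p : V -> R) :=
  forall v : V, 0 <= p v <= 1.

Definition catv (R : realType) (T : choiceType) (X Y : {fset T})
  (p : X -> R) (q : Y -> R) : (X `|` Y) -> R :=
  fun z => match (insub (val z) : option X) with
           | Some x => p x
           | None => match (insub (val z) : option Y) with
                     | Some y => q y
                     | None => 0
                     end
           end.

Definition onem_vec (R : realType) (T : choiceType) (V : {fset T}) (p : V -> R)
  : V -> R := fun v => 1 - p v.

Definition perm_ext (T : choiceType) (V : {fset T}) (pi : {perm V}) : T -> T :=
  fun t => match (insub t : option V) with
           | Some v => val (pi v)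
           | None => t
           end.

Definition perm_vec (R : realType) (T : choiceType) (V : {fset T}) (pi : {perm V})
  (p : V -> R) : V -> R := fun v => p ((pi^-1)%g v).

Definition self_elt (T : choiceType) (x : T) : [fset x] := [` fset11 x].

Definition mlog (R : realType) (p : R) : \bar R :=
  if p == 0 then +oo%E else (- ln p)%:E.

Definition A1 (R : realType) (T : choiceType) (L : loss R T) :=
  forall (V : {fset T}) (p : V -> R), unitvec p -> L V p STrue = 0%E.

Definition A2 (R : realType) (T : choiceType) (L : loss R T) :=
  forall (X Y : {fset T}) (a b : sentence T) (p : X -> R) (q : Y -> R),
    X `&` Y = fset0 -> fsubset (svars a) X -> fsubset (svars b) Y ->
    unitvec p -> unitvec q ->
    L (X `|` Y) (catv p q) (SAnd a b) = (L X p a + L Y q b)%E.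

Definition A5 (R : realType) (T : choiceType) (L : loss R T) :=
  forall x : T, exists K K' : R, forall p : [fset x] -> R, unitvec p ->
    L [fset x] p (SVar x) = (K%:E * mlog (p (self_elt x)))%E /\
    L [fset x] p (SNot (SVar x)) = (K'%:E * mlog (1 - p (self_elt x)))%E.

Definition A6 (R : realType) (T : choiceType) (L : loss R T) :=
  forall (V : {fset T}) (p : V -> R) (a : sentence T),
    fsubset (svars a) V -> unitvec p ->
    L V p a = L V (onem_vec p) (sbar a).

Definition A7 (R : realType) (T : choiceType) (L : loss R T) :=
  forall (V : {fset T}) (p : V -> R) (a : sentence T) (pi : {perm V}),
    fsubset (svars a) V -> unitvec p ->
    L V p a = L V (perm_vec pi p) (srename (perm_ext pi) a).

Definition no_minfty (R : realType) (T : choiceType) (L : loss R T) :=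
  forall (V : {fset T}) (p : V -> R) (a : sentence T),
    fsubset (svars a) V -> unitvec p -> L V p a != -oo%E.

From HB Require Import structures.
From mathcomp Require Import all_boot all_order all_algebra.
From mathcomp Require Import fingroup perm finmap.
From mathcomp Require Import reals constructive_ereal exp.
From Stdlib Require Import FunctionalExtensionality Classical.

(* Evaluated at p = 1/2, the literal X costs K_X ln 2 and the literal ~X costs
   K'_X ln 2; value symmetry (A6) exchanges the two, so K_X = K'_X.  For
   distinct X and Y, give X probability 1/2 and Y probability 1: by additive
   independence (A2) the loss of X /\ Y is K_X ln 2, and the transposition of
   X and Y (A7) turns this configuration into the one with the roles swapped,
   whose loss is K_Y ln 2.  Hence all the constants coincide. *)

Import Order.TTheory GRing.Theory Num.Theory.
Local Open Scope ring_scope.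
Local Open Scope fset_scope.

Lemma ln2_neq0 (R : realType) : ln (2 : R) != 0.
Proof. by rewrite gt_eqF // ln_gt0 // ltr1n. Qed.

Lemma mlog1 (R : realType) : mlog (1 : R) = 0%E.
Proof. by rewrite /mlog oner_eq0 ln1 oppr0. Qed.

Lemma mlogV2 (R : realType) : mlog (2^-1 : R) = (ln 2)%:E.
Proof. by rewrite /mlog invr_eq0 pnatr_eq0 /= lnV ?opprK // posrE ltr0n. Qed.

Section Vectors.
Context {R : realType} {T : choiceType}.

Definition restr {V : {fset T}} (g : T -> R) : V -> R := fun v => g (val v).

Definition half_at (x z : T) : R := if z == x then 2^-1 else 1.

Lemma unitvec_onem {V : {fset T}} {p : V -> R} :
  unitvec p -> unitvec (onem_vec p).
Proof.
move=> up v; have /andP[p0 p1] := up v.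
by rewrite /onem_vec subr_ge0 p1 lerBlDr lerDl p0.
Qed.

Lemma unitvec_half_at {V : {fset T}} (x : T) :
  unitvec (restr (half_at x) : V -> R).
Proof.
move=> v; rewrite /restr /half_at; case: ifP => _; rewrite ?lexx ?ler01 //.
by rewrite invr_ge0 ler0n invf_le1 ?ler1n ?ltr0n.
Qed.

Lemma catv_restr (X Y : {fset T}) (g : T -> R) :
  catv (restr g : X -> R) (restr g : Y -> R) = restr g.
Proof.
apply: functional_extensionality => z; rewrite /catv /restr.
case: insubP => [u _ -> //|nX]; case: insubP => [u _ -> //|nY].
by have := fsvalP z; rewrite inE (negbTE nX) (negbTE nY).
Qed.

Lemma perm_extE {V : {fset T}} (pi : {perm V}) (v : V) :
  perm_ext pi (val v) = val (pi v).
Proof.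
rewrite /perm_ext; case: insubP => [u _ /val_inj -> //|].
by rewrite (valP v).
Qed.

Lemma perm_vec_half_at {V : {fset T}} (a b : V) :
  perm_vec (tperm a b) (restr (half_at (val a))) = restr (half_at (val b)).
Proof.
apply: functional_extensionality => v.
rewrite /perm_vec /restr /half_at tpermV !val_eqE.
by rewrite (canF_eq (tpermK a b)) tpermL.
Qed.

End Vectors.

Lemma fset1I_neq (T : choiceType) (x y : T) :
  x != y -> [fset x] `&` [fset y] = fset0.
Proof. by move=> nxy; rewrite fsetI1 inE eq_sym (negbTE nxy). Qed.

Section LiteralCoefficients.
Context {R : realType} {T : choiceType} (L : loss R T).

Definition literal_loss (x : T) (K K' : R) :=
  forall p : [fset x] -> R, unitvec p ->
    L [fset x] p (SVar x) = (K%:E * mlog (p (self_elt x)))%E /\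
    L [fset x] p (SNot (SVar x)) = (K'%:E * mlog (1 - p (self_elt x)))%E.

Lemma literal_half_at {x : T} {K K' : R} (y : T) : literal_loss x K K' ->
  L [fset x] (restr (half_at y)) (SVar x) = (if x == y then K * ln 2 else 0)%:E.
Proof.
move=> hx; rewrite (hx _ (unitvec_half_at y)).1 /restr /half_at /=.
by case: eqP => _; rewrite ?mlogV2 ?mlog1 ?mule0 ?EFinM.
Qed.

Lemma literal_coef_unique {x : T} {K1 K1' K2 K2' : R} :
  literal_loss x K1 K1' -> literal_loss x K2 K2' -> K1 = K2.
Proof.
move=> h1 h2; have := literal_half_at x h1.
by rewrite (literal_half_at x h2) eqxx => -[] /(mulIf (ln2_neq0 R)).
Qed.

Lemma literal_coef_neg {x : T} {K K' : R} : A6 L -> literal_loss x K K' -> K = K'.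
Proof.
move=> hA6 hx.
have up : unitvec (restr (half_at x) : [fset x] -> R) := unitvec_half_at x.
have := hA6 _ _ (SVar x) (fsubset_refl _) up.
rewrite (literal_half_at x hx) eqxx /= (hx _ (unitvec_onem up)).2.
rewrite /onem_vec /restr /half_at /= eqxx opprB addrC subrK mlogV2 -EFinM.
by move=> -[] /(mulIf (ln2_neq0 R)).
Qed.

Lemma loss_and_half_at (x y z : T) : A2 L -> x != y ->
  L ([fset x] `|` [fset y]) (restr (half_at z)) (SAnd (SVar x) (SVar y)) =
  (L [fset x] (restr (half_at z)) (SVar x) +
   L [fset y] (restr (half_at z)) (SVar y))%E.
Proof.
move=> hA2 nxy; rewrite -catv_restr.
by apply: hA2; rewrite ?fset1I_neq ?fsubset_refl //; exact: unitvec_half_at.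
Qed.

Lemma literal_coef_swap {x y : T} {Kx Kx' Ky Ky' : R} : A2 L -> A7 L -> x != y ->
  literal_loss x Kx Kx' -> literal_loss y Ky Ky' -> Kx = Ky.
Proof.
move=> hA2 hA7 nxy hx hy.
have xW : x \in [fset x] `|` [fset y] by rewrite !inE eqxx.
have yW : y \in [fset x] `|` [fset y] by rewrite !inE eqxx orbT.
have := hA7 _ _ (SAnd (SVar x) (SVar y)) (tperm [` xW] [` yW]) (fsubset_refl _)
  (unitvec_half_at x).
rewrite (perm_vec_half_at [` xW] [` yW]) /=.
rewrite (perm_extE _ [` xW]) (perm_extE _ [` yW]) tpermL tpermR /=.
rewrite [in RHS]fsetUC !loss_and_half_at // 1?eq_sym //.
rewrite !(literal_half_at _ hx) !(literal_half_at _ hy) !eqxx eq_sym.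
rewrite (negbTE nxy) -!EFinD !addr0.
by move=> -[] /(mulIf (ln2_neq0 R)).
Qed.

Lemma literal_coef_eq {x y : T} {Kx Kx' Ky Ky' : R} : A2 L -> A7 L ->
  literal_loss x Kx Kx' -> literal_loss y Ky Ky' -> Kx = Ky.
Proof.
move=> hA2 hA7 hx hy; case: (eqVneq x y) => [exy|nxy].
  by rewrite -exy in hy; apply: literal_coef_unique hx hy.
exact: literal_coef_swap hx hy.
Qed.

End LiteralCoefficients.

Theorem lemma2 (R : realType) (T : choiceType) (L : loss R T) :
  no_minfty L -> A1 L -> A2 L -> A5 L -> A6 L -> A7 L ->
  exists K : R, forall (x : T) (p : [fset x]%fset -> R), unitvec p ->
    L [fset x]%fset p (SVar x) = (K%:E * mlog (p (self_elt x)))%E /\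
    L [fset x]%fset p (SNot (SVar x)) = (K%:E * mlog (1 - p (self_elt x)))%E.
Proof.
move=> _ _ hA2 hA5 hA6 hA7.
have [[x0 _]|T0] := classic (exists x : T, True); last first.
  by exists 0 => x; case: T0; exists x.
have [K0 [K0' h0]] := hA5 x0.
exists K0 => x; have [K [K' hx]] := hA5 x.
have eKK' := literal_coef_neg L hA6 hx.
have eKK0 := literal_coef_eq L hA2 hA7 hx h0.
by move: hx; rewrite -eKK' eKK0; apply.
Qed.
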